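(* Let $R$ be a ring, $P$ a polygon, $D$ a dissection of $P$, and $c:\operatorname{diag}P\to R$ a map. The following are equivalent: (i) $c$ is a weak frieze with respect to $D$; (ii) $c_{tv}\in R^*$ for every $(t,v)\in D$, and for all distinct vertices $i,k$ of $P$, \[ c_{ik}=\sum_{p\in\mathscr{P}(D,i,k)} c_p . \]
   Context: $R^*$ denotes the set of invertible elements of $R$. A polygon $P$ is a finite set $V$ of at least three vertices with a cyclic ordering, thought of as geometrically realised as a convex polygon in the plane. $\operatorname{diag}P$ is the set of ordered pairs $(i,k)$ of distinct vertices (diagonals); $(i,k)$ is an edge if $i,k$ are neighbours in the cyclic order, otherwise an internal diagonal. Diagonals $(i,k)$ and $(j,\ell)$ cross if $i,j,k,\ell$ are pairwise distinct and $i<j<k<\ell$ or $i<\ell<k<j$ in the cyclic order. A dissection of $P$ is a set $D$ of internal diagonals such that $(i,k)\in D$ implies $(k,i)\in D$, and no two diagonals in $D$ cross. We write $c_{ik}=c(i,k)$ and use the convention $c_{xx}=0$. A map $c:\operatorname{diag}P\to R$ is a weak frieze with respect to $D$ if (1) $c_{tv}\in R^*$ for all $(t,v)\in D$, and (2) whenever $(i,k)$ crosses $(t,v)$ with $(t,v),(v,t)\in D$, one has $c_{ik}=c_{it}c_{vt}^{-1}c_{vk}+c_{iv}c_{tv}^{-1}c_{tk}$. A sequence $(p_1,\ldots,p_\pi)$ of vertices is a $T$-path from $p_1$ to $p_\pi$ with respect to $D$ if: $p_1\neq p_\pi$; the sets $\{p_1,p_2\},\{p_2,p_3\},\ldots,\{p_{\pi-1},p_\pi\}$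 are pairwise different and each has two elements; no diagonal $(p_\alpha,p_{\alpha+1})$ crosses a diagonal in $D$; each diagonal $(p_{2\alpha},p_{2\alpha+1})$ lies in $D$ and crosses $(p_1,p_\pi)$, and these crossing points progress monotonically in the direction from $p_1$ to $p_\pi$. (Then $\pi$ is even.) $\mathscr{P}(D,i,k)$ denotes the set of $T$-paths from $i$ to $k$ with respect to $D$. For such a $T$-path $p$ (assuming $c_{tv}\in R^*$ for $(t,v)\in D$), $c_p=c_{p_1p_2}c_{p_3p_2}^{-1}c_{p_3p_4}c_{p_5p_4}^{-1}\cdots c_{p_{\pi-1}p_{\pi-2}}^{-1}c_{p_{\pi-1}p_\pi}$. *)

From HB Require Import structures.
From mathcomp Require Import all_boot all_order all_algebra.
Set Implicit Arguments. Unset Strict Implicit. Unset Printing Implicit Defensive.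
Import GRing.Theory.
Local Open Scope ring_scope.

(* A polygon with n vertices: the vertex set 'I_n with the cyclic order
   0 -> 1 -> ... -> n-1 -> 0. *)

Definition cyc3 (n : nat) (a b c : 'I_n) : bool :=
  [|| ((a < b)%N && (b < c)%N), ((b < c)%N && (c < a)%N)
    | ((c < a)%N && (a < b)%N)].

Definition cyc4 (n : nat) (a b c d : 'I_n) : bool :=
  cyc3 a b c && cyc3 a c d.

Definition cross (n : nat) (i k j l : 'I_n) : bool :=
  uniq [:: i; j; k; l] && (cyc4 i j k l || cyc4 i l k j).

Definition neighbours (n : nat) (i k : 'I_n) : bool :=
  ((val k == (val i).+1 %% n)%N) || ((val i == (val k).+1 %% n)%N).

Definition internal_diag (n : nat) (i k : 'I_n) : bool :=
  (i != k) && ~~ neighbours i k.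

Definition dissection (n : nat) (D : {set 'I_n * 'I_n}) : Prop :=
  [/\ forall t v, (t, v) \in D -> internal_diag t v,
      forall t v, (t, v) \in D -> (v, t) \in D
    & forall t v t' v', (t, v) \in D -> (t', v') \in D -> ~~ cross t v t' v'].

Definition weak_frieze (R : unitRingType) (n : nat) (D : {set 'I_n * 'I_n})
    (c : 'I_n -> 'I_n -> R) : Prop :=
  (forall t v, (t, v) \in D -> c t v \is a GRing.unit) /\
  (forall i k t v, (t, v) \in D -> (v, t) \in D -> cross i k t v ->
     c i k = c i t * (c v t)^-1 * c v k + c i v * (c t v)^-1 * c t k).

(* Combinatorial rendering of "the crossing point of diagonal (a,b) with the
   diagonal (s,e) comes strictly before (in direction s -> e) the crossing
   point of (a',b') with (s,e)", for non-crossing diagonals (a,b), (a',b')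
   both crossing (s,e): every endpoint of (a',b') not on (a,b) lies on the
   same side of (a,b) as e. *)
Definition crosses_before (n : nat) (e a b a' b' : 'I_n) : bool :=
  all (fun y => (y \in [:: a; b]) || (cyc3 a y b == cyc3 a e b)) [:: a'; b'].

(* p = [:: p_1; ...; p_pi] (0-indexed in Rocq: p_(j+1) = nth i p j)
   is a T-path from i to k with respect to D. *)
Definition Tpath (n : nat) (D : {set 'I_n * 'I_n}) (i k : 'I_n)
    (p : seq 'I_n) : bool :=
  let q j := nth i p j in
  let L := (size p).-1 in
  [&& (0 < size p)%N, q 0%N == i, q L == k, i != k,
      all (fun a => q a != q a.+1) (iota 0 L),
      uniq [seq [set q a; q a.+1] | a <- iota 0 L],
      all (fun a => [forall d in D, ~~ cross (q a) (q a.+1) d.1 d.2])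
          (iota 0 L),
      (* each (p_(2al), p_(2al+1)) lies in D and crosses (p_1, p_pi) *)
      all (fun a => odd a ==> (((q a, q a.+1) \in D) && cross (q a) (q a.+1) i k))
          (iota 0 L)
    &
      all (fun a => all (fun b => (odd a && odd b) ==>
             crosses_before k (q a) (q a.+1) (q b) (q b.+1))
             (iota a.+1 (L - a.+1))) (iota 0 L)].

Definition Tweight (R : unitRingType) (n : nat) (c : 'I_n -> 'I_n -> R)
    (i : 'I_n) (p : seq 'I_n) : R :=
  \prod_(j < (size p).-1)
     (if odd j then (c (nth i p j.+1) (nth i p j))^-1
      else c (nth i p j) (nth i p j.+1)).

(* A T-path has pairwise different
   edges {p_a,p_(a+1)}, so its length is at most n(n-1)/2 + 1 < n*n + 2;
   hence enumerating tuples of length < n*n+2 enumerates all T-paths, each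
   exactly once. *)
Definition Tsum (R : unitRingType) (n : nat) (D : {set 'I_n * 'I_n})
    (c : 'I_n -> 'I_n -> R) (i k : 'I_n) : R :=
  \sum_(m < (n * n).+2) \sum_(t : m.-tuple 'I_n | Tpath D i k t) Tweight c i t.

From HB Require Import structures.
From mathcomp Require Import all_boot all_order all_algebra.
Set Implicit Arguments. Unset Strict Implicit. Unset Printing Implicit Defensive.
Import GRing.Theory.

(* Let (t, v) be the diagonal of D crossing (i, k) nearest to i.  Every T-path
   from i to k begins with the edge (i, t) or (i, v).  The T-paths from i to k
   with second vertex t correspond to the T-paths from v to k: drop the edge
   (i, t) if the path continues along (t, v), and replace i by v otherwise.
   So the sums of T-path weights satisfy the frieze relation at (t, v).
   Both implications follow by induction on the number of diagonals of D
   crossing (i, k): a weak frieze obeys the same recursion as the sums, and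
   conversely the relation at any diagonal of D crossing (i, k) is reduced to
   the one at (t, v) by expanding with relations for diagonals crossed fewer
   times.  The planar facts needed involve at most seven vertices and depend
   only on their cyclic order, so they are checked on all configurations of
   {0, ..., 6}. *)

(** * Configurations of at most seven vertices *)

(* Copies of [cyc3], [cross] and [crosses_before] on plain naturals, so that
   statements about a handful of vertices can be decided by evaluation. *)
Definition ncyc3 (a b c : nat) : bool :=
  [|| (a < b) && (b < c), (b < c) && (c < a) | (c < a) && (a < b)].

Definition ncross (i k j l : nat) : bool :=
  uniq [:: i; j; k; l] &&
  ((ncyc3 i j k && ncyc3 i k l) || (ncyc3 i l k && ncyc3 i k j)).

Definition ncrosses_before (e a b a' b' : nat) : bool :=
  all (fun y => (y \in [:: a; b]) || (ncyc3 a y b == ncyc3 a e b)) [:: a'; b'].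

Arguments ncyc3 : simpl never.
Arguments ncross : simpl never.
Arguments ncrosses_before : simpl never.

Section OrderInvariance.
Variables (s : seq nat) (f : nat -> nat).
Hypothesis f_mono : {in s &, {mono f : x y / x < y}}.

Lemma mono_in_eq : {in s &, {mono f : x y / x == y}}.
Proof.
move=> x y xs ys; case: (ltngtP x y) => [xy|yx|->]; last exact: eqxx.
- by rewrite ltn_eqF // f_mono.
- by rewrite gtn_eqF // f_mono.
Qed.

Lemma ncyc3_mono a b c : a \in s -> b \in s -> c \in s ->
  ncyc3 (f a) (f b) (f c) = ncyc3 a b c.
Proof. by move=> ha hb hc; rewrite /ncyc3 !f_mono. Qed.

Lemma ncross_mono i k j l : i \in s -> k \in s -> j \in s -> l \in s ->
  ncross (f i) (f k) (f j) (f l) = ncross i k j l.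
Proof.
by move=> hi hk hj hl; rewrite /ncross /= !inE !negb_or !mono_in_eq // !ncyc3_mono.
Qed.

Lemma ncrosses_before_mono e a b a' b' :
  e \in s -> a \in s -> b \in s -> a' \in s -> b' \in s ->
  ncrosses_before (f e) (f a) (f b) (f a') (f b') = ncrosses_before e a b a' b'.
Proof.
by move=> he ha hb ha' hb'; rewrite /ncrosses_before /= !inE !mono_in_eq // !ncyc3_mono.
Qed.

End OrderInvariance.

Definition rank_in (s : seq nat) (x : nat) : nat := count (ltn^~ x) s.

Lemma rank_in_mono s : {in s &, {mono rank_in s : x y / x < y}}.
Proof.
have rank_le x y : x <= y -> rank_in s x <= rank_in s y.
  by move=> xy; apply: sub_count => z /= zx; apply: leq_trans zx xy.
have rank_lt x y : x < y -> x \in s -> rank_in s x < rank_in s y.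
  move=> xy; rewrite /rank_in; elim: s {rank_le} => //= a t IH.
  rewrite inE => /orP[/eqP<-|xt].
    by rewrite ltnn xy add0n add1n ltnS; apply: sub_count => z /= /ltn_trans; apply.
  have lt_t := IH xt; case: (ltnP a x) => ax; first by rewrite (ltn_trans ax xy).
  by case: (a < y); rewrite ?add0n ?add1n // ltnW.
move=> x y xs ys; case: (ltnP x y) => xy; first exact: rank_lt.
by apply/negbTE; rewrite -leqNgt; apply: rank_le.
Qed.

Lemma rank_in_lt_size s x : x \in s -> rank_in s x < size s.
Proof.
rewrite /rank_in -[size s]count_predT; elim: s => //= a t IH.
rewrite inE => /orP[/eqP->|xt]; first by rewrite ltnn add0n add1n ltnS count_size.
by have := IH xt; case: (a < x); rewrite ?add1n ?add0n ?ltnS // => /ltnW.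
Qed.

Fixpoint configs (m k : nat) : seq (seq nat) :=
  if k is k'.+1 then [seq x :: t | x <- iota 0 m, t <- configs m k'] else [:: [::]].

Lemma mem_configs m t : all (gtn m) t -> t \in configs m (size t).
Proof.
elim: t => [|x t IH] //= /andP[xm tm].
by apply: allpairs_f; rewrite ?mem_iota // IH.
Qed.

Lemma all_configs (G : pred (seq nat)) m :
  all G (configs m m) ->
  (forall s f, size s = m -> {in s &, {mono f : x y / x < y}} -> G (map f s) = G s) ->
  forall s, size s = m -> G s.
Proof.
move=> Gm G_mono s sm; rewrite -(G_mono s (rank_in s) sm (@rank_in_mono s)).
apply: (allP Gm); have := @mem_configs m (map (rank_in s) s).
rewrite size_map sm; apply; apply/allP => _ /mapP[x xs ->].
by rewrite /= -sm rank_in_lt_size.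
Qed.

Section Ordinals.
Variable n : nat.
Implicit Types i k j l a b e t v x y z : 'I_n.

Lemma cyc3E a b c : cyc3 a b c = ncyc3 a b c.
Proof. by []. Qed.

Lemma crossE i k j l : cross i k j l = ncross i k j l.
Proof. by rewrite /cross /ncross -(map_inj_uniq val_inj). Qed.

Lemma crosses_beforeE e a b a' b' :
  crosses_before e a b a' b' = ncrosses_before e a b a' b'.
Proof. by rewrite /crosses_before /ncrosses_before /= !inE -!val_eqE. Qed.

End Ordinals.

Ltac order_invariance :=
  let fm := fresh "f_mono" in
  move=> [|? [|? [|? [|? [|? [|? [|? [|? ?]]]]]]]] ? //= _ fm;
  rewrite ?(ncross_mono fm) ?(ncrosses_before_mono fm)
          ?(ncyc3_mono fm) ?(mono_in_eq fm) //;
  by rewrite !inE eqxx ?orbT.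

(* Proves a statement about the vertices [s] from the predicate [G] restating
   it on naturals, by evaluating [G] on all configurations of [size s] points. *)
Ltac by_configs G s :=
  rewrite ?crossE ?crosses_beforeE ?cyc3E -?val_eqE;
  let cfg := fresh "cfg" in
  assert (cfg : G (map val s)) by
    (apply: (@all_configs G (size s) _ _ (map val s) (size_map _ _));
     [by vm_compute | order_invariance]);
  rewrite /= in cfg;
  repeat (let h := fresh "h" in intro h; rewrite h /= in cfg);
  solve [exact: cfg | apply/eqP; exact: cfg].

Definition crossC_cfg : pred (seq nat) := fun s =>
  if s is [:: a; b; c; d] then ncross a b c d == ncross c d a b else true.

Definition crossSr_cfg : pred (seq nat) := fun s =>
  if s is [:: a; b; c; d] then ncross a b c d == ncross a b d c else true.

Definition crosses_before_sym_cfg : pred (seq nat) := fun s =>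
  if s is [:: k; t; v; a; b] then
    (k != t) ==> (k != v) ==> (t != v) ==>
    (ncrosses_before k t v a b == ncrosses_before k v t a b)
  else true.

Definition cross_side_end_cfg : pred (seq nat) := fun s =>
  if s is [:: i; k; t; v; a; b] then
    ncross i k t v ==> ~~ ncross t v a b ==> ncross v k a b ==> ncross i k a b
  else true.

Definition cross_side_start_cfg : pred (seq nat) := fun s =>
  if s is [:: i; k; t; v; a; b] then
    ncross i k t v ==> ~~ ncross t v a b ==> ncross i t a b ==> ncross i k a b
  else true.

Definition ncross_side_end_cfg : pred (seq nat) := fun s =>
  if s is [:: i; k; t; v; x] then
    ncross i k t v ==> ~~ ncross t v i x ==> ~~ ncross v k i x
  else true.

Definition later_ncross_side_start_cfg : pred (seq nat) := fun s =>
  if s is [:: i; k; t; v; a; b] then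
    ncross i k t v ==> ~~ ncross t v a b ==> ncrosses_before k t v a b ==>
    ~~ ncross i t a b
  else true.

Definition later_cross_side_end_cfg : pred (seq nat) := fun s =>
  if s is [:: i; k; t; v; a; b] then
    ncross i k t v ==> ncross i k a b ==> ~~ ncross t v a b ==>
    ncrosses_before k t v a b ==> (v != a) ==> (v != b) ==> ncross v k a b
  else true.

Definition earlier_cross_side_start_cfg : pred (seq nat) := fun s =>
  if s is [:: i; k; t; v; a; b] then
    ncross i k a b ==> ncross i k t v ==> ~~ ncross a b t v ==>
    ncrosses_before k a b t v ==> (t != a) ==> (t != b) ==> ncross i t a b
  else true.

Definition later_vertex_side_cfg : pred (seq nat) := fun s =>
  if s is [:: i; k; t; v; a; b] then
    ncross i k t v ==> ncross i k a b ==> ~~ ncross t v a b ==>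
    ncrosses_before k t v a b ==> (v != a) ==> (v != b) ==>
    (ncyc3 a v b != ncyc3 a k b)
  else true.

Definition start_edge_endpoint_cfg : pred (seq nat) := fun s =>
  if s is [:: i; k; t; v; y; z] then
    ncross i k t v ==> ncross i k y z ==> ncrosses_before k t v y z ==>
    ~~ ncross t v y z ==> ~~ ncross i y t v ==> (y != i) ==> (y == t) || (y == v)
  else true.

Definition not_before_start_side_cfg : pred (seq nat) := fun s =>
  if s is [:: i; k; t; v; a; b] then
    ncross i k t v ==> ~~ ncrosses_before k t v a b ==>
    [&& a != t, a != v & ncyc3 t a v == ncyc3 t i v] ||
    [&& b != t, b != v & ncyc3 t b v == ncyc3 t i v]
  else true.

Definition start_side_sub_cfg : pred (seq nat) := fun s =>
  if s is [:: i; k; t; v; a; b; x] then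
    ncross i k t v ==> ncross i k a b ==> ~~ ncross t v a b ==>
    ~~ ncrosses_before k t v a b ==> (x != a) ==> (x != b) ==>
    (ncyc3 a x b == ncyc3 a i b) ==>
    [&& x != t, x != v & ncyc3 t x v == ncyc3 t i v]
  else true.

Section Geometry.
Variable n : nat.
Implicit Types i k a b t v x y z : 'I_n.

Lemma crossC a b t v : cross a b t v = cross t v a b.
Proof. by_configs crossC_cfg [:: a; b; t; v]. Qed.

Lemma crossSr a b t v : cross a b t v = cross a b v t.
Proof. by_configs crossSr_cfg [:: a; b; t; v]. Qed.

Lemma cross_neq a b t v : cross a b t v ->
  [&& a != b, a != t, a != v, b != t, b != v & t != v].
Proof.
case/andP; rewrite /= !inE !negb_or (eq_sym t b).
by case/and3P=> /and3P[-> -> ->] /andP[-> ->] /andP[-> _].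
Qed.

Lemma crosses_before_sym k t v a b : k != t -> k != v -> t != v ->
  crosses_before k t v a b = crosses_before k v t a b.
Proof. by_configs crosses_before_sym_cfg [:: k; t; v; a; b]. Qed.

Lemma crosses_before_avoid k t v a b x :
  crosses_before k t v a b -> x != t -> x != v -> cyc3 t x v != cyc3 t k v ->
  (x != a) && (x != b).
Proof.
move=> /andP[ha /andP[hb _]] xt xv xk; apply/andP; split; apply/eqP => ex.
  by move: ha; rewrite -ex !inE (negbTE xt) (negbTE xv) (negbTE xk).
by move: hb; rewrite -ex !inE (negbTE xt) (negbTE xv) (negbTE xk).
Qed.

Lemma cross_side_end i k t v a b :
  cross i k t v -> ~~ cross t v a b -> cross v k a b -> cross i k a b.
Proof. by_configs cross_side_end_cfg [:: i; k; t; v; a; b]. Qed.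

Lemma cross_side_start i k t v a b :
  cross i k t v -> ~~ cross t v a b -> cross i t a b -> cross i k a b.
Proof. by_configs cross_side_start_cfg [:: i; k; t; v; a; b]. Qed.

Lemma ncross_side_end i k t v x :
  cross i k t v -> ~~ cross t v i x -> ~~ cross v k i x.
Proof. by_configs ncross_side_end_cfg [:: i; k; t; v; x]. Qed.

Lemma later_ncross_side_start i k t v a b :
  cross i k t v -> ~~ cross t v a b -> crosses_before k t v a b ->
  ~~ cross i t a b.
Proof. by_configs later_ncross_side_start_cfg [:: i; k; t; v; a; b]. Qed.

Lemma later_cross_side_end i k t v a b :
  cross i k t v -> cross i k a b -> ~~ cross t v a b ->
  crosses_before k t v a b -> v != a -> v != b -> cross v k a b.
Proof. by_configs later_cross_side_end_cfg [:: i; k; t; v; a; b]. Qed.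

Lemma earlier_cross_side_start i k t v a b :
  cross i k a b -> cross i k t v -> ~~ cross a b t v ->
  crosses_before k a b t v -> t != a -> t != b -> cross i t a b.
Proof. by_configs earlier_cross_side_start_cfg [:: i; k; t; v; a; b]. Qed.

Lemma later_vertex_side i k t v a b :
  cross i k t v -> cross i k a b -> ~~ cross t v a b ->
  crosses_before k t v a b -> v != a -> v != b -> cyc3 a v b != cyc3 a k b.
Proof. by_configs later_vertex_side_cfg [:: i; k; t; v; a; b]. Qed.

Lemma start_edge_endpoint i k t v y z :
  cross i k t v -> cross i k y z -> crosses_before k t v y z ->
  ~~ cross t v y z -> ~~ cross i y t v -> y != i -> (y == t) || (y == v).
Proof. by_configs start_edge_endpoint_cfg [:: i; k; t; v; y; z]. Qed.

Lemma not_before_start_side i k t v a b :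
  cross i k t v -> ~~ crosses_before k t v a b ->
  [&& a != t, a != v & cyc3 t a v == cyc3 t i v] ||
  [&& b != t, b != v & cyc3 t b v == cyc3 t i v].
Proof. by_configs not_before_start_side_cfg [:: i; k; t; v; a; b]. Qed.

Lemma start_side_sub i k t v a b x :
  cross i k t v -> cross i k a b -> ~~ cross t v a b ->
  ~~ crosses_before k t v a b -> x != a -> x != b -> cyc3 a x b == cyc3 a i b ->
  [&& x != t, x != v & cyc3 t x v == cyc3 t i v].
Proof. by_configs start_side_sub_cfg [:: i; k; t; v; a; b; x]. Qed.

End Geometry.

(** * T-paths as sequences of edges *)

Section OddItems.
Variable T : Type.

Fixpoint odd_items (s : seq T) : seq T :=
  if s is _ :: y :: s' then y :: odd_items s' else [::].

Lemma odd_items_map_iota (F : nat -> T) L m : ~~ odd m ->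
  odd_items (map F (iota m L)) = map F [seq a <- iota m L | odd a].
Proof.
elim/ltn_ind: L m => -[|[|L]] IH m even_m //=; first by rewrite (negbTE even_m).
by rewrite (negbTE even_m) /= IH //= negbK.
Qed.

Lemma pairwise_map_odd_iota (C : rel T) (F : nat -> T) L m :
  pairwise C (map F [seq a <- iota m L | odd a]) =
  all (fun a => all (fun b => (odd a && odd b) ==> C (F a) (F b))
                    (iota a.+1 (m + L - a.+1))) (iota m L).
Proof.
elim: L m => [|L IH] m //=.
rewrite addnS -addSn -IH subSS addKn.
case: (odd m) => /=; last by rewrite (@eq_all _ _ predT) ?all_predT.
by congr (_ && _); rewrite all_map all_filter; apply: eq_all.
Qed.

End OddItems.

Lemma pairmap_pairE (T : Type) (y x : T) (s : seq T) :
  pairmap pair x s =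
  map (fun a => (nth y (x :: s) a, nth y (x :: s) a.+1)) (iota 0 (size s)).
Proof.
elim: s x => [|z s IH] x //=.
by rewrite IH -[1]/(1 + 0)%N iotaDl -map_comp.
Qed.

Section Tpaths.
Variables (n : nat) (D : {set 'I_n * 'I_n}).
Implicit Types (i k t v x y : 'I_n) (e : 'I_n * 'I_n) (p s : seq 'I_n).

Definition edges p : seq ('I_n * 'I_n) :=
  if p is x :: s then pairmap pair x s else [::].

Definition edge_set e : {set 'I_n} := [set e.1; e.2].

Definition noncrossing e := [forall d in D, ~~ cross e.1 e.2 d.1 d.2].

Definition crossing_diag i k e := (e \in D) && cross e.1 e.2 i k.

Definition before k e e' := crosses_before k e.1 e.2 e'.1 e'.2.

(* The diagonals (p_2, p_3), (p_4, p_5), ... of a T-path are its odd edges. *)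
Definition is_Tpath i k p :=
  if p is x :: s then
    [&& x == i, last x s == k, i != k, all (fun e => e.1 != e.2) (edges p),
        uniq (map edge_set (edges p)), all noncrossing (edges p),
        all (crossing_diag i k) (odd_items (edges p))
      & pairwise (before k) (odd_items (edges p))]
  else false.

Lemma TpathE i k p : Tpath D i k p = is_Tpath i k p.
Proof.
case: p => [|x s] //; rewrite /Tpath /is_Tpath /= (pairmap_pairE i).
rewrite !all_map -map_comp odd_items_map_iota // all_map all_filter.
rewrite pairwise_map_odd_iota add0n.
by rewrite -[size s]/((size (x :: s)).-1) nth_last.
Qed.

End Tpaths.

Section Weights.
Variables (R : unitRingType) (n : nat) (c : 'I_n -> 'I_n -> R).
Local Open Scope ring_scope.

Fixpoint alt_weight (S : seq ('I_n * 'I_n)) : R :=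
  match S with
  | e :: e' :: S' => c e.1 e.2 * (c e'.2 e'.1)^-1 * alt_weight S'
  | [:: e] => c e.1 e.2
  | [::] => 1
  end.

Lemma alt_weight_map_iota (F : nat -> 'I_n * 'I_n) L m : ~~ odd m ->
  \prod_(j <- iota m L)
     (if odd j then (c (F j).2 (F j).1)^-1 else c (F j).1 (F j).2)
  = alt_weight (map F (iota m L)).
Proof.
elim/ltn_ind: L m => -[|[|L]] IH m even_m /=; first by rewrite big_nil.
  by rewrite big_cons big_nil (negbTE even_m) mulr1.
by rewrite !big_cons (negbTE even_m) /= even_m mulrA IH //= negbK.
Qed.

Lemma TweightE x p : Tweight c x p = alt_weight (edges p).
Proof.
case: p => [|y s]; first by rewrite /Tweight big_ord0.
rewrite /Tweight /= (pairmap_pairE x) -alt_weight_map_iota //.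
by rewrite -[in RHS](subn0 (size s)) -/(index_iota 0 _) big_mkord.
Qed.

End Weights.

Section Enumeration.
Variable n : nat.

Definition seqs_of_size m : seq (seq 'I_n) :=
  [seq val t | t <- enum {: m.-tuple 'I_n}].

Definition short_seqs N : seq (seq 'I_n) :=
  flatten [seq seqs_of_size m | m <- iota 0 N].

Lemma mem_seqs_of_size m s : (s \in seqs_of_size m) = (size s == m).
Proof.
apply/mapP/idP => [[t _ ->]|/eqP sm]; first by rewrite size_tuple.
by exists (Tuple (introT eqP sm)); rewrite ?mem_enum.
Qed.

Lemma uniq_seqs_of_size m : uniq (seqs_of_size m).
Proof. by rewrite map_inj_uniq ?enum_uniq //; apply: val_inj. Qed.

Lemma mem_short_seqs N s : (s \in short_seqs N) = (size s < N).
Proof.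
apply/flattenP/idP => [[r /mapP[m m_lt ->]]|s_lt].
  by rewrite mem_seqs_of_size => /eqP ->; move: m_lt; rewrite mem_iota.
exists (seqs_of_size (size s)); last by rewrite mem_seqs_of_size.
by apply: map_f; rewrite mem_iota.
Qed.

Lemma uniq_short_seqs N : uniq (short_seqs N).
Proof.
elim: N => [|N IH] //; rewrite /short_seqs -addn1 iotaD map_cat flatten_cat.
rewrite cat_uniq IH /= cats0 uniq_seqs_of_size andbT.
apply/hasP => -[s]; rewrite mem_seqs_of_size => /eqP sN.
by rewrite mem_short_seqs sN ltnn.
Qed.

Variable D : {set 'I_n * 'I_n}.
Implicit Types (i k : 'I_n) (p : seq 'I_n).

(* A T-path uses pairwise different edges, so it has at most n * n edges. *)
Lemma Tpath_size i k p : is_Tpath D i k p -> size p < (n * n).+2.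
Proof.
case: p => [|x s] // /and5P[_ _ _ _ /andP[uniq_edges _]].
have := uniq_leq_size uniq_edges (_ : {subset _ <= map (@edge_set n) (enum [set: 'I_n * 'I_n])}).
rewrite !size_map size_pairmap -cardE cardsT card_prod card_ord ltnS ltnS.
by apply => _ /mapP[e _ ->]; rewrite map_f ?mem_enum ?inE.
Qed.

Definition Tpaths i k := [seq p <- short_seqs (n * n).+2 | is_Tpath D i k p].

Lemma mem_Tpaths i k p : (p \in Tpaths i k) = is_Tpath D i k p.
Proof.
rewrite mem_filter mem_short_seqs; case Tp: (is_Tpath D i k p) => //=.
exact: Tpath_size Tp.
Qed.

Lemma uniq_Tpaths i k : uniq (Tpaths i k).
Proof. exact/filter_uniq/uniq_short_seqs. Qed.

Lemma TsumE (R : unitRingType) (c : 'I_n -> 'I_n -> R) i k :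
  Tsum D c i k = (\sum_(p <- Tpaths i k) alt_weight c (edges p))%R.
Proof.
rewrite big_filter /Tsum /short_seqs big_flatten big_map.
rewrite -[in RHS](subn0 (n * n).+2) -/(index_iota 0 _) big_mkord.
apply: eq_bigr => m _; rewrite big_map big_enum_cond.
by apply: congr_big => // [t|t _]; rewrite ?inE ?TpathE ?TweightE.
Qed.

End Enumeration.

(** * Decomposition of T-paths along the first diagonal *)

Section Dissection.
Variables (n : nat) (D : {set 'I_n * 'I_n}).
Hypothesis hD : dissection D.
Implicit Types (i k t v a b x y z : 'I_n) (d e : 'I_n * 'I_n) (p q s : seq 'I_n).

Lemma D_sym t v : (t, v) \in D -> (v, t) \in D.
Proof. by case: hD => _ + _; apply. Qed.

Lemma D_ncross t v a b : (t, v) \in D -> (a, b) \in D -> ~~ cross t v a b.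
Proof. by case: hD => _ _; apply. Qed.

Lemma D_ncross_pair d d' : d \in D -> d' \in D -> ~~ cross d.1 d.2 d'.1 d'.2.
Proof. by case: d d' => [t v] [a b]; apply: D_ncross. Qed.

Lemma D_noncrossing d : d \in D -> noncrossing D d.
Proof. by move=> dD; apply/forall_inP => d' d'D; apply: D_ncross_pair. Qed.

Lemma edges_cons2 x y s : edges (x :: y :: s) = (x, y) :: edges (y :: s).
Proof. by []. Qed.

Lemma mem_edges x s e : e \in edges (x :: s) -> (e.1 \in x :: s) && (e.2 \in s).
Proof.
elim: s x => [|y s IH] x //=; rewrite inE => /orP[/eqP->|].
  by rewrite /= !inE !eqxx ?orbT.
by move/IH; rewrite !inE => /andP[-> ->]; rewrite !orbT.
Qed.

Lemma notin_edges x s y : y \notin x :: s ->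
  forall e, e \in edges (x :: s) -> (y != e.1) && (y != e.2).
Proof.
move=> yxs e /mem_edges /andP[e1 e2].
by apply/andP; split; apply: contraNneq yxs => ->; rewrite ?inE ?e2 ?orbT.
Qed.

Lemma edge_set_notin y e0 (S : seq ('I_n * 'I_n)) :
  (forall e, e \in S -> (y != e.1) && (y != e.2)) -> y \in edge_set e0 ->
  edge_set e0 \notin map (@edge_set n) S.
Proof.
move=> yS ye0; apply/mapP => -[e eS e0e]; move: ye0; rewrite e0e !inE.
by have /andP[/negbTE -> /negbTE ->] := yS e eS.
Qed.

Lemma vertex_on_odd_edge x s y : y \in s -> (y == last x s) ||
  has (fun e => (y == e.1) || (y == e.2)) (odd_items (edges (x :: s))).
Proof.
move: {2}(size s) (leqnn (size s)) => m; elim: m x s => [|m IH] x [|y1 [|y2 s]] //=.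
rewrite ltnS => /ltnW sm; rewrite !inE => /or3P[/eqP->|/eqP->|ys]; rewrite ?eqxx ?orbT //.
by have /orP[->|->] := IH y2 s sm ys; rewrite ?orbT.
Qed.

Lemma is_Tpath_cons i k x s : is_Tpath D i k (x :: s) =
  [&& x == i, last x s == k, i != k, all (fun e => e.1 != e.2) (edges (x :: s)),
      uniq (map (@edge_set n) (edges (x :: s))), all (noncrossing D) (edges (x :: s)),
      all (crossing_diag D i k) (odd_items (edges (x :: s)))
    & pairwise (before k) (odd_items (edges (x :: s)))].
Proof. by []. Qed.

Section TpathProperties.
Variables (i k x : 'I_n) (s : seq 'I_n).
Hypothesis xs_Tpath : is_Tpath D i k (x :: s).

Lemma Tpath_head : x = i.
Proof. by case/and3P: xs_Tpath => /eqP. Qed.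
Lemma Tpath_last : last x s = k.
Proof. by case/and3P: xs_Tpath => _ /eqP. Qed.
Lemma Tpath_ends_neq : i != k.
Proof. by case/and3P: xs_Tpath => _ _ /and5P[]. Qed.
Lemma Tpath_steps_neq : all (fun e => e.1 != e.2) (edges (x :: s)).
Proof. by case/and3P: xs_Tpath => _ _ /and5P[]. Qed.
Lemma Tpath_uniq_edges : uniq (map (@edge_set n) (edges (x :: s))).
Proof. by case/and3P: xs_Tpath => _ _ /and5P[]. Qed.
Lemma Tpath_noncrossing : all (noncrossing D) (edges (x :: s)).
Proof. by case/and3P: xs_Tpath => _ _ /and5P[]. Qed.
Lemma Tpath_diags : all (crossing_diag D i k) (odd_items (edges (x :: s))).
Proof. by case/and3P: xs_Tpath => _ _ /and5P[_ _ _ _ /andP[]]. Qed.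
Lemma Tpath_monotone : pairwise (before k) (odd_items (edges (x :: s))).
Proof. by case/and3P: xs_Tpath => _ _ /and5P[_ _ _ _ /andP[]]. Qed.

End TpathProperties.

Lemma Tpath_notin v k s y : is_Tpath D v k (v :: s) -> y != k ->
  (forall d, d \in odd_items (edges (v :: s)) -> (y != d.1) && (y != d.2)) ->
  y \notin s.
Proof.
move=> Tp yk yd; apply/negP => /(vertex_on_odd_edge v) /orP[].
  by rewrite (Tpath_last Tp) (negbTE yk).
by case/hasP => d /yd /andP[/negbTE -> /negbTE ->].
Qed.

Lemma Tpath_head_notin v k s : is_Tpath D v k (v :: s) -> v \notin s.
Proof.
move=> Tp; apply: (Tpath_notin Tp (Tpath_ends_neq Tp)) => d.
move=> /(allP (Tpath_diags Tp)) /andP[_] /cross_neq /and5P[_ vd1 _ vd2 _].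
by rewrite !(eq_sym v) vd1 vd2.
Qed.

(* The diagonal of [D] whose crossing point with (i, k) is closest to i. *)
Definition first_diag i k t v := [&& (t, v) \in D, cross i k t v &
  [forall d in D, cross i k d.1 d.2 ==> crosses_before k t v d.1 d.2]].

Lemma first_diag_sym i k t v : first_diag i k t v -> first_diag i k v t.
Proof.
case/and3P => tvD ikc /forall_inP first_tv; apply/and3P; split.
- exact: D_sym.
- by rewrite crossSr.
have /and5P[_ _ _ kt /andP[kv tv]] := cross_neq ikc.
apply/forall_inP => d dD; rewrite -crosses_before_sym //; exact: first_tv.
Qed.

Lemma first_diag_before i k t v a b : first_diag i k t v ->
  (a, b) \in D -> cross i k a b -> crosses_before k t v a b.
Proof. by case/and3P => _ _ /forall_inP/(_ (a, b)) tv_min abD; apply/implyP/tv_min. Qed.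

Lemma first_diag_cross_end i k t1 v1 t v : first_diag i k t1 v1 ->
  (t, v) \in D -> cross i k t v -> v1 != t -> v1 != v -> cross v1 k t v.
Proof.
move=> first_tv1 tvD ikc; have /and3P[tv1D ikc1 _] := first_tv1.
exact: later_cross_side_end ikc1 ikc (D_ncross tv1D tvD) (first_diag_before first_tv1 tvD ikc).
Qed.

Lemma first_diag_cross_start i k t1 v1 t v : first_diag i k t1 v1 ->
  (t, v) \in D -> cross i k t v -> t != t1 -> t != v1 -> cross i t t1 v1.
Proof.
move=> first_tv1 tvD ikc; have /and3P[tv1D ikc1 _] := first_tv1.
exact: earlier_cross_side_start ikc1 ikc (D_ncross tv1D tvD) (first_diag_before first_tv1 tvD ikc).
Qed.

(* Prepending the edge (i, t) to a T-path p from v: if p starts with the edge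
   (v, t), its first vertex is replaced by i instead, so that no edge repeats. *)
Definition Tprepend i t p := if nth i p 1 == t then i :: behead p else i :: t :: p.

Lemma nth_Tprepend i t p : nth i (Tprepend i t p) 1 = t.
Proof. by rewrite /Tprepend; case: eqP => [<-|] //=; case: p => [|x [|y s]]. Qed.

Section FirstDiagonal.
Variables (i k t v : 'I_n).
Hypothesis first_tv : first_diag i k t v.

Let tvD : (t, v) \in D. Proof. by case/and3P: first_tv. Qed.
Let ikc : cross i k t v. Proof. by case/and3P: first_tv. Qed.
Let first_min d : d \in D -> cross i k d.1 d.2 -> crosses_before k t v d.1 d.2.
Proof. by case: d => a b; apply: first_diag_before. Qed.

Lemma first_side_noncrossing : noncrossing D (i, t).
Proof.
apply/forall_inP => d dD /=; apply/negP => itc.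
have ikd := cross_side_start ikc (D_ncross_pair tvD dD) itc.
by have := later_ncross_side_start ikc (D_ncross_pair tvD dD) (first_min dD ikd); rewrite itc.
Qed.

Lemma Tpath_end_diags p : is_Tpath D v k p ->
  all (crossing_diag D i k) (odd_items (edges p)).
Proof.
case: p => [|x s] // Tp; apply/allP => d /(allP (Tpath_diags Tp)) /andP[dD vkd].
rewrite /crossing_diag dD crossC.
by apply: (cross_side_end ikc (D_ncross_pair tvD dD)); rewrite crossC.
Qed.

Lemma Tpath_end_after p : is_Tpath D v k p -> all (before k (t, v)) (odd_items (edges p)).
Proof.
move/Tpath_end_diags/allP => diags; apply/allP => d /diags /andP[dD ikd].
by apply: first_min; rewrite // crossC.
Qed.

Lemma Tpath_end_notin s : is_Tpath D v k (v :: s) -> i \notin v :: s.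
Proof.
have /and5P[ik _ iv _ _] := cross_neq ikc.
move=> Tp; rewrite inE negb_or iv /=; apply: (Tpath_notin Tp ik) => -[a b].
move=> /(allP (Tpath_diags Tp)) /andP[abD /= vkab].
apply/andP; split; apply: contraTneq vkab => iab; rewrite -iab in abD *; rewrite crossC.
  exact: ncross_side_end ikc (D_ncross tvD abD).
by rewrite crossSr; apply: ncross_side_end ikc (D_ncross tvD (D_sym abD)).
Qed.
Lemma Tpath_prepend_shortcut w s :
  is_Tpath D v k [:: v, t, w & s] -> is_Tpath D i k [:: i, t, w & s].
Proof.
move=> Tp; have /and3P[ik it _] := cross_neq ikc.
have last_k : last w s = k := Tpath_last Tp.
have diags := Tpath_end_diags Tp; have i_notin := notin_edges (Tpath_end_notin Tp).
move: (Tpath_steps_neq Tp) (Tpath_uniq_edges Tp) (Tpath_noncrossing Tp) (Tpath_monotone Tp) diags.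
rewrite !edges_cons2 is_Tpath_cons !edges_cons2 /= eqxx last_k eqxx ik it.
move=> /andP[_ ->] /andP[_ ->] /andP[_ ->] -> ->; rewrite first_side_noncrossing !andbT.
apply: (@edge_set_notin i _ ((t, w) :: edges (w :: s))); last by rewrite !inE eqxx.
by move=> e e_in; apply: i_notin; rewrite edges_cons2 inE e_in orbT.
Qed.

Lemma Tpath_prepend_extend y s : y != t ->
  is_Tpath D v k [:: v, y & s] -> is_Tpath D i k [:: i, t, v, y & s].
Proof.
move=> yt Tp; have /and5P[ik it iv _ /andP[_ tv]] := cross_neq ikc.
have last_k : last y s = k := Tpath_last Tp.
have i_notin := notin_edges (Tpath_end_notin Tp).
have it_new : edge_set (i, t) \notin map (@edge_set n) ((t, v) :: edges [:: v, y & s]).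
  apply: (@edge_set_notin i); last by rewrite !inE eqxx.
  by move=> e; rewrite inE => /orP[/eqP->|/i_notin //]; rewrite /= it iv.
have tv_new : edge_set (t, v) \notin map (@edge_set n) (edges [:: v, y & s]).
  rewrite edges_cons2 map_cons inE negb_or; apply/andP; split.
    apply/negP => /eqP tv_vy; have := set21 t v.
    rewrite -[[set t; v]]/(edge_set (t, v)) tv_vy !inE.
    by rewrite (negbTE tv) eq_sym (negbTE yt).
  apply: (@edge_set_notin v); last by rewrite !inE eqxx orbT.
  exact: notin_edges (Tpath_head_notin Tp).
move: (Tpath_steps_neq Tp) (Tpath_uniq_edges Tp) (Tpath_noncrossing Tp) (Tpath_monotone Tp).
move: (Tpath_end_diags Tp) (Tpath_end_after Tp) it_new tv_new.
rewrite is_Tpath_cons !edges_cons2 /= => -> -> -> -> -> -> -> ->.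
rewrite eqxx last_k eqxx ik it tv first_side_noncrossing D_noncrossing //=.
by rewrite /crossing_diag tvD crossC ikc.
Qed.

Lemma Tpath_prepend p : is_Tpath D v k p -> is_Tpath D i k (Tprepend i t p).
Proof.
case: p => [|x [|y s]] // Tp; have xv := Tpath_head Tp; subst x.
  by move: (Tpath_last Tp) (cross_neq ikc) => /= ->; rewrite eqxx !andbF.
rewrite /Tprepend /=; case: (eqVneq y t) => [yt|yt]; last exact: Tpath_prepend_extend.
subst y; case: s Tp => [|w s] Tp; last exact: Tpath_prepend_shortcut.
by move: (Tpath_last Tp) (cross_neq ikc) => /= ->; rewrite eqxx !andbF.
Qed.

Lemma Tpath_second_vertex q : is_Tpath D i k q -> (nth i q 1 == t) || (nth i q 1 == v).
Proof.
case: q => [|x [|y [|z s]]] // Tp; have xi := Tpath_head Tp; subst x.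
- by move: (Tpath_last Tp) (Tpath_ends_neq Tp) => /= ->; rewrite eqxx.
- have yk : y = k := Tpath_last Tp.
  have /andP[/forall_inP /(_ _ tvD)] := Tpath_noncrossing Tp.
  by rewrite /= yk ikc.
have /andP[/andP[yzD ikyz] _] := Tpath_diags Tp.
have /andP[/forall_inP /(_ _ tvD) iy _] := Tpath_noncrossing Tp.
have /andP[iy' _] := Tpath_steps_neq Tp.
rewrite crossC in ikyz; rewrite /= in iy iy' *.
rewrite (start_edge_endpoint ikc ikyz) ?(first_min yzD) ?(D_ncross tvD yzD) // eq_sym //.
Qed.

Lemma later_avoid_end a b (L : seq ('I_n * 'I_n)) :
  (a, b) \in D -> cross i k a b -> v != a -> v != b -> all (before k (a, b)) L ->
  all (fun d => (v != d.1) && (v != d.2)) ((a, b) :: L).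
Proof.
move=> abD ikab va vb /allP abL.
have side := later_vertex_side ikc ikab (D_ncross tvD abD) (first_min abD ikab) va vb.
by rewrite /= va vb; apply/allP => d /abL ab_d; apply: crosses_before_avoid ab_d va vb side.
Qed.

Lemma later_cross_end (L : seq ('I_n * 'I_n)) :
  all (crossing_diag D i k) L -> all (fun d => (v != d.1) && (v != d.2)) L ->
  all (crossing_diag D v k) L.
Proof.
move=> /allP ikL /allP vL; apply/allP => d dL.
have /andP[dD dik] := ikL d dL; have /andP[vd1 vd2] := vL d dL.
rewrite crossC in dik; rewrite /crossing_diag dD crossC.
exact: later_cross_side_end ikc dik (D_ncross_pair tvD dD) (first_min dD dik) vd1 vd2.
Qed.

Lemma Tpath_prepend_extend_inv r : is_Tpath D i k [:: i, t, v & r] ->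
  exists2 p, is_Tpath D v k p & [:: i, t, v & r] = Tprepend i t p.
Proof.
move=> Tq; have /and5P[_ _ _ _ /andP[kv _]] := cross_neq ikc.
have last_k : last v r = k := Tpath_last Tq.
move: (Tpath_steps_neq Tq) (Tpath_uniq_edges Tq) (Tpath_noncrossing Tq).
move: (Tpath_diags Tq) (Tpath_monotone Tq); rewrite !edges_cons2 /=.
move=> /andP[_ ik_diags] /andP[tv_before mono] /and3P[_ _ neq] /and3P[_ tv_new uniq_e].
move=> /and3P[_ _ nc].
have avoid : all (fun d => (v != d.1) && (v != d.2)) (odd_items (edges (v :: r))).
  case: r {Tq last_k} neq uniq_e nc ik_diags tv_before mono tv_new => [|a [|b r]] //.
  rewrite !edges_cons2 /= => /andP[va _] /andP[va_new _] _.
  move=> /andP[/andP[abD ikab] _] _ /andP[ab_before _] _.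
  have vb : v != b.
    apply: contraNneq va_new => <-; by rewrite /= inE /edge_set /= setUC eqxx.
  by rewrite crossC in ikab; apply: later_avoid_end.
exists (v :: r).
  rewrite is_Tpath_cons eqxx last_k eqxx eq_sym kv neq uniq_e nc mono /= andbT.
  exact: later_cross_end.
case: r {Tq avoid ik_diags tv_before mono neq uniq_e nc} last_k tv_new => [/= vk|a r _].
  by rewrite vk eqxx in kv.
rewrite /Tprepend /=; case: eqP => // ->.
by rewrite inE /edge_set /= setUC eqxx.
Qed.

Lemma Tpath_prepend_shortcut_inv z r : z != v -> is_Tpath D i k [:: i, t, z & r] ->
  exists2 p, is_Tpath D v k p & [:: i, t, z & r] = Tprepend i t p.
Proof.
move=> zv Tq; have /and5P[_ _ _ _ /andP[kv tv]] := cross_neq ikc.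
have last_k : last z r = k := Tpath_last Tq.
move: (Tpath_steps_neq Tq) (Tpath_uniq_edges Tq) (Tpath_noncrossing Tq).
move: (Tpath_diags Tq) (Tpath_monotone Tq); rewrite !edges_cons2 /=.
move=> ik_diags mono /and3P[_ tz neq] /and3P[_ tz_new uniq_e] /and3P[_ tz_nc nc].
have /andP[/andP[tzD tz_ik] _] := ik_diags; rewrite crossC in tz_ik.
have /andP[tz_before _] := mono.
have vt : v != t by rewrite eq_sym.
have vz : v != z by rewrite eq_sym.
have avoid := later_avoid_end tzD tz_ik vt vz tz_before.
have v_notin : v \notin z :: r.
  rewrite inE negb_or vz /=; apply/negP => /(vertex_on_odd_edge z) /orP[].
    by rewrite last_k eq_sym (negbTE kv).
  case/hasP => d d_in; suff /andP[/negbTE -> /negbTE ->] : (v != d.1) && (v != d.2) by [].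
  by apply: (allP avoid); rewrite inE d_in orbT.
have v_diags := @later_cross_end ((t, z) :: odd_items (edges (z :: r))) ik_diags avoid.
exists [:: v, t, z & r]; last by rewrite /Tprepend /= eqxx.
move: v_diags; rewrite is_Tpath_cons !edges_cons2 /= => ->.
rewrite eqxx last_k eqxx eq_sym kv vt tz neq tz_new uniq_e tz_nc nc.
rewrite (D_noncrossing (D_sym tvD)) mono /= !andbT.
apply: (@edge_set_notin v _ ((t, z) :: edges (z :: r))); last by rewrite !inE eqxx.
move=> e; rewrite inE => /orP[/eqP->|]; last exact: notin_edges v_notin e.
by rewrite /= vt vz.
Qed.

Lemma Tpath_prepend_inv q : is_Tpath D i k q -> nth i q 1 == t ->
  exists2 p, is_Tpath D v k p & q = Tprepend i t p.
Proof.
case: q => [|x [|y [|z r]]] // Tq; have xi := Tpath_head Tq; subst x.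
- by move: (Tpath_last Tq) (Tpath_ends_neq Tq) => /= ->; rewrite eqxx.
- move=> /= /eqP yt; subst y.
  by move: (Tpath_last Tq) (cross_neq ikc) => /= ->; rewrite eqxx !andbF.
move=> /= /eqP yt; subst y; case: (eqVneq z v) => [zv|zv].
  by subst z; apply: Tpath_prepend_extend_inv.
exact: Tpath_prepend_shortcut_inv.
Qed.

End FirstDiagonal.

Lemma Tprepend_inj i k t v p1 p2 : is_Tpath D v k p1 -> is_Tpath D v k p2 ->
  Tprepend i t p1 = Tprepend i t p2 -> p1 = p2.
Proof.
case: p1 => [|x1 s1] // Tp1; case: p2 => [|x2 s2] // Tp2.
have x1v := Tpath_head Tp1; have x2v := Tpath_head Tp2; subst x1 x2.
have vt_repeat s : ~~ is_Tpath D v k [:: v, t, v & s].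
  apply/negP => /Tpath_uniq_edges /= /andP[].
  by rewrite inE /edge_set /= setUC eqxx.
rewrite /Tprepend /=; case: eqP => [e1|_]; case: eqP => [e2|_] //=.
- by case=> ->.
- case: s1 Tp1 e1 => [|a s1] // Tp1 _ [a_t s1_s2].
  by have := vt_repeat s2; rewrite -a_t -s1_s2 Tp1.
- case: s2 Tp2 e2 => [|a s2] // Tp2 _ [t_a s1_s2].
  by have := vt_repeat s1; rewrite t_a s1_s2 Tp2.
- by case=> ->.
Qed.

Lemma Tpaths_first_diag i k t v : first_diag i k t v ->
  perm_eq (Tpaths D i k) (map (Tprepend i t) (Tpaths D v k) ++ map (Tprepend i v) (Tpaths D t k)).
Proof.
move=> first_tv; have first_vt := first_diag_sym first_tv.
have /and3P[_ ikc _] := first_tv; have /and5P[_ _ _ _ /andP[_ tv]] := cross_neq ikc.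
apply: uniq_perm; first exact: uniq_Tpaths.
  rewrite cat_uniq !map_inj_in_uniq ?uniq_Tpaths //=.
  - rewrite andbT; apply/hasP => -[q /mapP[p2 _ ->] /mapP[p1 _]].
    move/(congr1 (fun q => nth i q 1)); rewrite !nth_Tprepend => /eqP.
    by rewrite eq_sym (negbTE tv).
  - by move=> p1 p2; rewrite !mem_Tpaths; apply: Tprepend_inj.
  - by move=> p1 p2; rewrite !mem_Tpaths; apply: Tprepend_inj.
move=> q; rewrite mem_cat mem_Tpaths; apply/idP/orP => [Tq|].
  have /orP[q1t|q1v] := Tpath_second_vertex first_tv Tq.
    by left; have [p Tp ->] := Tpath_prepend_inv first_tv Tq q1t; rewrite map_f ?mem_Tpaths.
  by right; have [p Tp ->] := Tpath_prepend_inv first_vt Tq q1v; rewrite map_f ?mem_Tpaths.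
by case=> /mapP[p]; rewrite mem_Tpaths => Tp ->; [move: (Tpath_prepend first_tv Tp)
                                                   | move: (Tpath_prepend first_vt Tp)].
Qed.

Lemma Tpaths_noncrossing i k : i != k -> noncrossing D (i, k) ->
  perm_eq (Tpaths D i k) [:: [:: i; k]].
Proof.
move=> ik ik_nc; apply: uniq_perm => //; first exact: uniq_Tpaths.
move=> q; rewrite mem_Tpaths inE; apply/idP/eqP => [|->]; last first.
  by rewrite is_Tpath_cons /= !eqxx ik ik_nc.
case: q => [|x [|y [|z s]]] // Tq; have xi := Tpath_head Tq; subst x.
- by move: (Tpath_last Tq) ik => /= ->; rewrite eqxx.
- by have /= -> := Tpath_last Tq.
have /andP[/andP[yzD /= yz_ik] _] := Tpath_diags Tq.
by move/forall_inP: ik_nc => /(_ _ yzD) /=; rewrite crossC yz_ik.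
Qed.

Definition ncrossings i k := #|[set d in D | cross i k d.1 d.2]|.

Lemma ncrossings_end_lt i k t v : (t, v) \in D -> cross i k t v ->
  (ncrossings v k < ncrossings i k)%N.
Proof.
move=> tvD ikc; apply: proper_card; apply/properP; split.
  apply/subsetP => d; rewrite !inE => /andP[dD vkd]; rewrite dD /=.
  exact: cross_side_end ikc (D_ncross_pair tvD dD) vkd.
exists (t, v); first by rewrite inE tvD ikc.
by rewrite inE /= negb_and; apply/orP; right; apply/negP => /cross_neq; rewrite eqxx !andbF.
Qed.

Lemma ncrossings_start_lt i k t v : (t, v) \in D -> cross i k t v ->
  (ncrossings i t < ncrossings i k)%N.
Proof.
move=> tvD ikc; apply: proper_card; apply/properP; split.
  apply/subsetP => d; rewrite !inE => /andP[dD itd]; rewrite dD /=.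
  exact: cross_side_start ikc (D_ncross_pair tvD dD) itd.
exists (t, v); first by rewrite inE tvD ikc.
by rewrite inE /= negb_and; apply/orP; right; apply/negP => /cross_neq; rewrite eqxx /= !andbF.
Qed.

(* Strictly smaller for the diagonals crossing (i, k) nearer to i, so its
   minimiser is the first diagonal. *)
Definition start_side i d :=
  #|[set x | [&& x != d.1, x != d.2 & cyc3 d.1 x d.2 == cyc3 d.1 i d.2]]|.

Lemma exists_first_diag i k : ~~ noncrossing D (i, k) -> exists t v, first_diag i k t v.
Proof.
move/forall_inPn => [d0 d0D /negPn ikd0].
pose P d := (d \in D) && cross i k d.1 d.2.
have P_d0 : P d0 by apply/andP.
have [[t v] /andP[tvD ikc] tv_min] := arg_minnP (start_side i) P_d0.
exists t, v; rewrite /first_diag tvD ikc; apply/forall_inP => -[a b] abD.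
apply/implyP => ikab; apply/negPn/negP => tv_ab.
have := tv_min (a, b); rewrite /P abD ikab => /(_ isT); apply/negP; rewrite -ltnNge.
apply: proper_card; apply/properP; split.
  apply/subsetP => x; rewrite !inE /= => /and3P[xa xb side].
  exact: start_side_sub ikc ikab (D_ncross tvD abD) tv_ab xa xb side.
have /orP[/and3P[a_t a_v side]|/and3P[bt bv side]] := not_before_start_side ikc tv_ab.
  by exists a; rewrite !inE /= ?a_t ?a_v ?side ?eqxx.
by exists b; rewrite !inE /= ?bt ?bv ?side ?eqxx ?andbF.
Qed.

End Dissection.

(** * Frieze relations *)

Section Frieze.
Variables (R : unitRingType) (n : nat) (D : {set 'I_n * 'I_n}).
Hypothesis hD : dissection D.
Variable c : 'I_n -> 'I_n -> R.
Implicit Types (i k t v : 'I_n) (p : seq 'I_n).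
Local Open Scope ring_scope.

Lemma alt_weight_cons2 e e' S :
  alt_weight c (e :: e' :: S) = c e.1 e.2 * (c e'.2 e'.1)^-1 * alt_weight c S.
Proof. by []. Qed.

Lemma alt_weight_swap_start a b x S : c x b \is a GRing.unit ->
  alt_weight c ((a, b) :: S) = c a b * (c x b)^-1 * alt_weight c ((x, b) :: S).
Proof. by move=> xb_unit; case: S => [|e S] /=; rewrite ?mulrA divrK. Qed.

Lemma alt_weight_Tprepend i k t v p : c v t \is a GRing.unit -> is_Tpath D v k p ->
  alt_weight c (edges (Tprepend i t p)) = c i t * (c v t)^-1 * alt_weight c (edges p).
Proof.
case: p => [|x [|y s]] // vt_unit Tp; have xv := Tpath_head Tp; subst x.
  by move: (Tpath_last Tp) (Tpath_ends_neq Tp) => /= ->; rewrite eqxx.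
rewrite /Tprepend [nth _ _ 1]/=; case: eqP => [->|_].
  by rewrite [behead _]/= !edges_cons2 -alt_weight_swap_start.
by rewrite !edges_cons2 alt_weight_cons2.
Qed.

Lemma Tsum_first_diag i k t v : first_diag D i k t v ->
  c v t \is a GRing.unit -> c t v \is a GRing.unit ->
  Tsum D c i k = c i t * (c v t)^-1 * Tsum D c v k + c i v * (c t v)^-1 * Tsum D c t k.
Proof.
move=> first_tv vt_unit tv_unit.
rewrite !TsumE (perm_big _ (Tpaths_first_diag hD first_tv)) big_cat !big_map !mulr_sumr.
by congr (_ + _); apply: eq_big_seq => p; rewrite mem_Tpaths;
  apply: alt_weight_Tprepend.
Qed.

Lemma Tsum_noncrossing i k : i != k -> noncrossing D (i, k) -> Tsum D c i k = c i k.
Proof.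
by move=> ik ik_nc; rewrite TsumE (perm_big _ (Tpaths_noncrossing ik ik_nc)) big_seq1.
Qed.

Lemma Tsum_of_weak_frieze : weak_frieze D c -> forall i k, i != k -> c i k = Tsum D c i k.
Proof.
case=> c_unit exchange.
suff Tsum_eq m i k : ncrossings D i k = m -> i != k -> c i k = Tsum D c i k.
  by move=> i k; apply: Tsum_eq.
elim/ltn_ind: m i k => m IH i k mu_ik ik; subst m.
have [ik_nc|/(exists_first_diag hD)[t [v first_tv]]] := boolP (noncrossing D (i, k)).
  by rewrite Tsum_noncrossing.
have /and3P[tvD ikc _] := first_tv; have /and5P[_ _ _ kt /andP[kv _]] := cross_neq ikc.
have vtD := D_sym hD tvD.
rewrite (Tsum_first_diag first_tv (c_unit _ _ vtD) (c_unit _ _ tvD)).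
have lt_vk := ncrossings_end_lt hD tvD ikc.
have lt_tk := ncrossings_end_lt hD vtD (etrans (crossSr _ _ _ _) ikc).
rewrite (exchange i k t v tvD vtD ikc) (IH _ lt_vk v k) 1?eq_sym //.
by rewrite (IH _ lt_tk t k) 1?eq_sym.
Qed.

Section Converse.
Hypothesis c_unit : forall t v, (t, v) \in D -> c t v \is a GRing.unit.
Hypothesis c_Tsum : forall i k, i != k -> c i k = Tsum D c i k.

Definition exchange i k t v :=
  c i k = c i t * (c v t)^-1 * c v k + c i v * (c t v)^-1 * c t k.

Lemma exchange_sym i k t v : exchange i k t v -> exchange i k v t.
Proof. by rewrite /exchange addrC. Qed.

Lemma exchange_first_diag i k t v : first_diag D i k t v -> exchange i k t v.
Proof.
move=> first_tv; have /and3P[tvD ikc _] := first_tv.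
have /and5P[ik _ _ kt /andP[kv _]] := cross_neq ikc.
rewrite /exchange c_Tsum // (Tsum_first_diag first_tv) ?c_unit ?(D_sym hD tvD) //.
by rewrite -!c_Tsum // eq_sym.
Qed.

Section Induction.
Variables i k : 'I_n.
Hypothesis IH : forall i' k' t v, (ncrossings D i' k' < ncrossings D i k)%N ->
  (t, v) \in D -> cross i' k' t v -> exchange i' k' t v.

(* Expanding c_ik at the first diagonal (t, v1), and then c_v1k at (t, v) and
   c_iv at (t, v1), yields the same expression as expanding c_ik at (t, v). *)
Lemma exchange_shared_vertex t v1 v : first_diag D i k t v1 ->
  (t, v) \in D -> cross i k t v -> v != v1 -> exchange i k t v.
Proof.
move=> first_tv1 tvD ikc vv1; have /and3P[tv1D ikc1 _] := first_tv1.
have /and5P[_ _ _ _ /andP[_ tv1]] := cross_neq ikc1.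
have /and5P[_ _ _ _ /andP[_ tv]] := cross_neq ikc.
have ikvt : cross i k v t by rewrite crossSr.
have v1k : exchange v1 k t v.
  apply: (IH (ncrossings_end_lt hD tv1D ikc1) tvD).
  by apply: (first_diag_cross_end hD first_tv1 tvD ikc); rewrite eq_sym.
have iv : exchange i v t v1.
  apply: (IH (ncrossings_start_lt hD (D_sym hD tvD) ikvt) tv1D).
  by apply: (first_diag_cross_start hD first_tv1 (D_sym hD tvD) ikvt); rewrite // eq_sym.
have ik := exchange_first_diag first_tv1.
rewrite /exchange in ik v1k iv *; rewrite ik v1k iv.
have v1t_unit := c_unit (D_sym hD tv1D); have tv_unit := c_unit tvD.
by rewrite !mulrDr !mulrDl !mulrA divrK // mulrK // addrA.
Qed.

Lemma exchange_disjoint t1 v1 t v : first_diag D i k t1 v1 ->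
  (t, v) \in D -> cross i k t v -> t != t1 -> t != v1 -> v != t1 -> v != v1 ->
  exchange i k t v.
Proof.
move=> first_tv1 tvD ikc tt1 tv1 vt1 vv1; have /and3P[tv1D ikc1 _] := first_tv1.
have first_v1t1 := first_diag_sym hD first_tv1.
have ikvt : cross i k v t by rewrite crossSr.
have ikv1t1 : cross i k v1 t1 by rewrite crossSr.
have v1k : exchange v1 k t v.
  apply: (IH (ncrossings_end_lt hD tv1D ikc1) tvD).
  by apply: (first_diag_cross_end hD first_tv1 tvD ikc); rewrite eq_sym.
have t1k : exchange t1 k t v.
  apply: (IH (ncrossings_end_lt hD (D_sym hD tv1D) ikv1t1) tvD).
  by apply: (first_diag_cross_end hD first_v1t1 tvD ikc); rewrite eq_sym.
have it : exchange i t t1 v1.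
  apply: (IH (ncrossings_start_lt hD tvD ikc) tv1D).
  exact: (first_diag_cross_start hD first_tv1 tvD ikc tt1 tv1).
have iv : exchange i v t1 v1.
  apply: (IH (ncrossings_start_lt hD (D_sym hD tvD) ikvt) tv1D).
  exact: (first_diag_cross_start hD first_tv1 (D_sym hD tvD) ikvt vt1 vv1).
have ik := exchange_first_diag first_tv1.
rewrite /exchange in ik v1k t1k it iv *; rewrite ik v1k t1k it iv.
by rewrite !mulrDr !mulrDl !mulrA addrACA.
Qed.

Lemma exchange_crossing t v : (t, v) \in D -> cross i k t v -> exchange i k t v.
Proof.
move=> tvD ikc.
have [t1 [v1 first_tv1]] : exists t1 v1, first_diag D i k t1 v1.
  apply: (exists_first_diag hD); rewrite /noncrossing; apply/forall_inPn.
  by exists (t, v); rewrite ?negbK.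
have first_v1t1 := first_diag_sym hD first_tv1.
have ikvt : cross i k v t by rewrite crossSr.
case: (eqVneq t t1) => [tt1|tt1].
  subst t1; case: (eqVneq v v1) => [vv1|vv1]; first by subst v1; apply: exchange_first_diag.
  exact: (exchange_shared_vertex first_tv1 tvD ikc vv1).
case: (eqVneq t v1) => [tv1|tv1].
  subst v1; case: (eqVneq v t1) => [vt1|vt1].
    by subst t1; apply/exchange_sym/exchange_first_diag.
  exact: (exchange_shared_vertex first_v1t1 tvD ikc vt1).
case: (eqVneq v t1) => [vt1|vt1].
  subst t1; apply: exchange_sym.
  exact: (exchange_shared_vertex first_tv1 (D_sym hD tvD) ikvt tv1).
case: (eqVneq v v1) => [vv1|vv1].
  subst v1; apply: exchange_sym.
  exact: (exchange_shared_vertex first_v1t1 (D_sym hD tvD) ikvt tt1).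
exact: (exchange_disjoint first_tv1 tvD ikc tt1 tv1 vt1 vv1).
Qed.

End Induction.

Lemma weak_frieze_of_Tsum : weak_frieze D c.
Proof.
split=> // i k t v tvD _.
suff exchange_ind m : ncrossings D i k = m -> cross i k t v -> exchange i k t v.
  by apply: exchange_ind.
elim/ltn_ind: m i k t v tvD => m IH i k t v tvD mu_ik; subst m.
apply: (exchange_crossing _ tvD) => i' k' t' v' lt_ik t'v'D.
exact: (IH _ lt_ik i' k' t' v' t'v'D erefl).
Qed.

End Converse.

End Frieze.

Local Open Scope ring_scope.

Theorem theoremB (R : unitRingType) (n : nat) (hn : (3 <= n)%N)
    (D : {set 'I_n * 'I_n}) (hD : dissection D) (c : 'I_n -> 'I_n -> R) :
  weak_frieze D c <->
  ((forall t v, (t, v) \in D -> c t v \is a GRing.unit) /\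
   (forall i k : 'I_n, i != k -> c i k = Tsum D c i k)).
Proof.
split=> [frieze|[c_unit c_Tsum]]; last exact: (weak_frieze_of_Tsum hD c_unit c_Tsum).
by split; [case: frieze | exact: (Tsum_of_weak_frieze hD frieze)].
Qed.
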